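(* Let $(W,\operatorname{supp}^W)$ be a PO-dilator and let $X$ be a partial order. Then every $\sigma\in W(X)$ has a unique normal form $\sigma=_{\mathrm{NF}}W(\iota_a)(\sigma_0)$, i.e. there are unique $a\in[X]^{<\omega}$ and $\sigma_0\in W(a)$ with $\sigma=W(\iota_a)(\sigma_0)$ and $\operatorname{supp}^W_a(\sigma_0)=a$. Moreover, for this normal form we have $a=\operatorname{supp}^W_X(\sigma)$.
   Context: A quasi embedding between partial orders $X,Y$ is a function $f:X\to Y$ such that $f(x)\leq_Y f(y)$ implies $x\leq_X y$; it is an embedding if the converse implication also holds. $\mathrm{PO}$ is the category of partial orders with quasi embeddings as morphisms. For a set $X$, $[X]^{<\omega}$ is the set of finite subsets of $X$, and for $f:X\to Y$ we put $[f]^{<\omega}(a)=\{f(x)\mid x\in a\}$. Subsets of partial orders are regarded as suborders; for $a\subseteq X$, $\iota_a:a\hookrightarrow X$ is the inclusion. A PO-dilator consists of a functor $W:\mathrm{PO}\to\mathrm{PO}$ such that $W(f)$ is an embedding whenever $f$ is an embedding, together with a natural transformation $\operatorname{supp}^W:W\Rightarrow[\cdot]^{<\omega}$ (functions $\operatorname{supp}^W_X:W(X)\to[X]^{<\omega}$ with $\operatorname{supp}^W_Y\circ W(f)=[f]^{<\omega}\circ\operatorname{supp}^W_X$ for all quasi embeddings $f:X\to Y$) satisfying the support condition: for every embedding $f:X\to Y$, $\operatorname{rng}(W(f))=\{\sigma\in W(Y)\mid \operatorname{supp}^W_Y(\sigma)\subseteq\operatorname{rng}(f)\}$. *)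

From Stdlib Require Import List ProofIrrelevance.

Set Implicit Arguments.
Unset Strict Implicit.

Record PO := mkPO {
  car :> Type;
  le : car -> car -> Prop;
  le_refl : forall x, le x x;
  le_antisym : forall x y, le x y -> le y x -> x = y;
  le_trans : forall x y z, le x y -> le y z -> le x z
}.

Record QE (X Y : PO) := mkQE {
  qfun :> car X -> car Y;
  qfun_qe : forall x y, @le Y (qfun x) (qfun y) -> @le X x y
}.

Definition is_embedding (X Y : PO) (f : QE X Y) : Prop :=
  forall x y, @le X x y -> @le Y (f x) (f y).

Definition QE_id (X : PO) : QE X X := @mkQE X X (fun x => x) (fun x y h => h).

Definition QE_comp (X Y Z : PO) (g : QE Y Z) (f : QE X Y) : QE X Z :=
  @mkQE X Z (fun x => g (f x))
    (fun x y h => qfun_qe (qfun_qe h)).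

Definition subset (X : Type) := X -> Prop.

Definition finite_subset (X : Type) (a : subset X) : Prop :=
  exists l : list X, forall x, a x <-> In x l.

Definition image (X Y : Type) (f : X -> Y) (a : subset X) : subset Y :=
  fun y => exists x, a x /\ f x = y.

Lemma subPO_antisym (X : PO) (a : subset X) (x y : {x : car X | a x}) :
  @le X (proj1_sig x) (proj1_sig y) -> @le X (proj1_sig y) (proj1_sig x) -> x = y.
Proof.
  destruct x as [x hx], y as [y hy]; simpl; intros h1 h2.
  assert (e := le_antisym h1 h2); subst y.
  f_equal; apply proof_irrelevance.
Qed.

Definition subPO (X : PO) (a : subset X) : PO :=
  @mkPO {x : car X | a x} (fun x y => @le X (proj1_sig x) (proj1_sig y))
    (fun x => le_refl (proj1_sig x))
    (@subPO_antisym X a)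
    (fun x y z => @le_trans X (proj1_sig x) (proj1_sig y) (proj1_sig z)).

Definition incl (X : PO) (a : subset X) : QE (subPO a) X :=
  @mkQE (subPO a) X (fun x => proj1_sig x) (fun x y h => h).

Record PO_dilator := mkDil {
  W :> PO -> PO;
  Wmor : forall X Y : PO, QE X Y -> QE (W X) (W Y);
  Wmor_id : forall (X : PO) (s : car (W X)), Wmor (QE_id X) s = s;
  Wmor_comp : forall (X Y Z : PO) (g : QE Y Z) (f : QE X Y) (s : car (W X)),
      Wmor (QE_comp g f) s = Wmor g (Wmor f s);
  Wmor_emb : forall (X Y : PO) (f : QE X Y),
      is_embedding f -> is_embedding (Wmor f);
  supp : forall X : PO, car (W X) -> subset (car X);
  supp_finite : forall (X : PO) (s : car (W X)), finite_subset (supp s);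
  supp_nat : forall (X Y : PO) (f : QE X Y) (s : car (W X)),
      supp (Wmor f s) = image f (supp s);
  supp_cond : forall (X Y : PO) (f : QE X Y), is_embedding f ->
      forall t : car (W Y),
        (exists s, Wmor f s = t) <-> (forall y, supp t y -> exists x, f x = y)
}.

From Stdlib Require Import FunctionalExtensionality PropExtensionality.

(* By the support condition for the embedding [iota_a] with [a = supp s], [s]
   has a preimage [s0] in [W a]; naturality of supports makes [supp s0] all of
   [a].  Conversely, any normal form [s = W(iota_b)(t0)] has [supp s = b] by
   naturality, and [t0] is then determined since [W(iota_b)], like every quasi
   embedding, is injective by antisymmetry. *)

Lemma subset_ext (X : Type) (a b : subset X) : (forall x, a x <-> b x) -> a = b.
Proof.
  intros Hab; apply functional_extensionality; intros x.
  apply propositional_extensionality, Hab.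
Qed.

Lemma QE_inj {X Y : PO} (f : QE X Y) {x y : car X} : f x = f y -> x = y.
Proof.
  intros Efxy; apply le_antisym; apply (@qfun_qe _ _ f); rewrite Efxy; apply le_refl.
Qed.

Lemma incl_embedding {X : PO} (a : subset X) : is_embedding (incl a).
Proof. intros x y Hxy; exact Hxy. Qed.

Lemma image_incl_eq_full (X : PO) (a : subset X) (c : subset (subPO a)) :
  image (incl a) c = a <-> c = (fun _ => True).
Proof.
  split.
  - intros Ec; apply subset_ext; intros x; split; [tauto | intros _].
    assert (Hx : image (incl a) c (proj1_sig x)) by (rewrite Ec; exact (proj2_sig x)).
    destruct Hx as [y [Hy Eyx]].
    replace x with y; [exact Hy | exact (QE_inj (incl a) Eyx)].
  - intros ->; apply subset_ext; intros x; split.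
    + intros [y [_ <-]]; exact (proj2_sig y).
    + intros Hx; exists (exist _ x Hx); split; reflexivity.
Qed.

Lemma supp_Wmor_incl (W : PO_dilator) (X : PO) (a : subset X)
    (s0 : car (W (subPO a))) :
  supp (Wmor W (incl a) s0) = a <-> supp s0 = (fun _ => True).
Proof. rewrite supp_nat; apply image_incl_eq_full. Qed.

Lemma Wmor_incl_supp_surj (W : PO_dilator) (X : PO) (s : car (W X)) :
  exists s0 : car (W (subPO (supp s))), Wmor W (incl (supp s)) s0 = s.
Proof.
  apply (supp_cond (incl_embedding (supp s))).
  intros x Hx; exists (exist _ x Hx); reflexivity.
Qed.

Theorem lemma2p2 (W : PO_dilator) (X : PO) (s : car (W X)) :
  exists (a : subset (car X)) (s0 : car (W (subPO a))),
    finite_subset a /\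
    s = @Wmor W _ _ (incl a) s0 /\
    @supp W _ s0 = (fun _ => True) /\
    (forall (b : subset (car X)) (t0 : car (W (subPO b))),
        finite_subset b ->
        s = @Wmor W _ _ (incl b) t0 ->
        @supp W _ t0 = (fun _ => True) ->
        existT (fun c : subset (car X) => car (W (subPO c))) b t0 =
        existT (fun c : subset (car X) => car (W (subPO c))) a s0) /\
    a = @supp W _ s.
Proof.
  destruct (Wmor_incl_supp_surj W X s) as [s0 Es0].
  assert (Hs0 : supp s0 = (fun _ => True)).
  { apply supp_Wmor_incl; rewrite Es0; reflexivity. }
  exists (supp s), s0; repeat split; auto using supp_finite.
  intros b t0 _ Et0 Ht0.
  assert (Eb : b = supp s) by (rewrite Et0; symmetry; apply supp_Wmor_incl, Ht0).
  subst b.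
  replace t0 with s0; [reflexivity |].
  apply (QE_inj (Wmor W (incl (supp s)))); rewrite <- Et0; exact Es0.
Qed.
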